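(* An oriented Burling graph has no directed cycle.
   Context: Oriented graphs are finite, without loops, multiple arcs or pairs of opposite arcs. In a rooted tree $T$ with root $r$, each non-root vertex $v$ has a parent $p(v)$; children, leaves, ancestors and descendants are as usual. A branch is a sequence $v_1\dots v_k$ ($k\ge0$) with $v_i$ the parent of $v_{i+1}$; it starts at $v_1$. A Burling tree is a 4-tuple $(T,r,\ell,c)$: $T$ a rooted tree with root $r$; $\ell$ assigns to each non-leaf vertex $v$ one of its children $\ell(v)$ (the last-born of $v$); $c$ assigns to every vertex $v$ that is neither the root nor a last-born the vertex-set of a (possibly empty) branch starting at $\ell(p(v))$, and $c(v)=\emptyset$ if $v$ is the root or a last-born. The oriented graph fully derived from it has vertex-set $V(T)$ and an arc $uv$ iff $v\in c(u)$; an oriented graph is derived from the Burling tree if it is an induced subgraph of the fully derived one. An oriented Burling graph is an oriented graph derived from some Burling tree. *)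

From mathcomp Require Import all_boot.
Set Implicit Arguments. Unset Strict Implicit. Unset Printing Implicit Defensive.

Section BurlingDefs.
Variable V : finType.

Definition step (par : V -> option V) (v : V) : V := odflt v (par v).

Definition is_rooted_tree (r : V) (par : V -> option V) : Prop :=
  par r = None /\
  (forall v, v != r -> par v <> None) /\
  (forall v, exists n, iter n (step par) v = r).

Definition is_child (par : V -> option V) (u v : V) : bool := par u == Some v.

Definition is_leaf (par : V -> option V) (v : V) : bool :=
  [forall u, ~~ is_child par u v].

(* a branch v_1 ... v_k with v_i the parent of v_{i+1} *)
Definition is_branch (par : V -> option V) (s : seq V) : bool :=
  if s is x :: t then path (fun a b => is_child par b a) x t else true.

Definition is_last_born (par : V -> option V) (lb : V -> V) (v : V) : Prop :=
  exists w, par v = Some w /\ lb w = v.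

(* (T, r, lb, c) is a Burling tree. lb is only meaningful on non-leaves. *)
Definition is_burling_tree (r : V) (par : V -> option V) (lb : V -> V)
    (c : V -> {set V}) : Prop :=
  is_rooted_tree r par /\
  (forall v, ~~ is_leaf par v -> is_child par (lb v) v) /\
  (forall v, (v = r \/ is_last_born par lb v) -> c v = set0) /\
  (forall v w, par v = Some w -> ~ is_last_born par lb v ->
     exists s : seq V, [/\ is_branch par s,
                          (if s is x :: _ then x = lb w else True) &
                          c v = [set x in s]]).

Definition fully_derived_arc (c : V -> {set V}) : rel V := fun u v => v \in c u.

End BurlingDefs.

Definition is_oriented_graph (W : finType) (arc : rel W) : Prop :=
  (forall x, ~~ arc x x) /\ (forall x y, arc x y -> ~~ arc y x).

(* (W, arc) is derived from the Burling tree (V, r, par, lb, c): it is an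
   induced subgraph of the fully derived graph, i.e. isomorphic to one via
   an injective vertex map preserving arcs and non-arcs. *)
Definition derived_from (W : finType) (arc : rel W) (V : finType)
    (c : V -> {set V}) : Prop :=
  exists f : W -> V, injective f /\
    forall x y, arc x y = fully_derived_arc c (f x) (f y).

Definition is_oriented_burling_graph (W : finType) (arc : rel W) : Prop :=
  is_oriented_graph arc /\
  exists (V : finType) (r : V) (par : V -> option V) (lb : V -> V)
         (c : V -> {set V}),
    is_burling_tree r par lb c /\ derived_from arc c.

Definition has_directed_cycle (W : finType) (arc : rel W) : Prop :=
  exists s : seq W, [/\ s != [::], uniq s & cycle arc s].

(* Picture the last-born of every vertex as its rightmost child.  An arc
   u -> v of a derived graph joins a vertex u lying below some non-last
   child of its parent w to a vertex v lying below the last-born of w, so v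
   is strictly to the right of u.  Being strictly to the right is a strict
   partial order on the vertices of a rooted tree, hence no directed cycle. *)

From mathcomp Require Import all_boot.
Set Implicit Arguments. Unset Strict Implicit. Unset Printing Implicit Defensive.

Lemma irreflexive_transitive_cycle_nil (T : Type) (e : rel T) (s : seq T) :
  irreflexive e -> transitive e -> cycle e s -> s = [::].
Proof.
move=> irr_e tr_e; rewrite cycle_all2rel //.
by case: s => // x s; rewrite allrel_cons2 irr_e.
Qed.

Section ParentMap.
Variables (V : finType) (par : V -> option V) (lb : V -> V).

Lemma step_parent v w : par v = Some w -> step par v = w.
Proof. by rewrite /step => ->. Qed.

Lemma fconnect_parent v w : par v = Some w -> fconnect (step par) v w.
Proof. by move/step_parent <-; apply: fconnect1. Qed.

Lemma proper_ancestor_parent v a w :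
  fconnect (step par) v a -> v != a -> par v = Some w -> fconnect (step par) w a.
Proof.
by rewrite fconnect_eqVf => /predU1P [-> | ? _ /step_parent <-]; rewrite ?eqxx.
Qed.

Lemma ancestors_total v a b :
  fconnect (step par) v a -> fconnect (step par) v b ->
  fconnect (step par) a b || fconnect (step par) b a.
Proof.
move=> /iter_findex <- /iter_findex <-.
set m := findex _ v a; set n := findex _ v b.
have [le_mn | /ltnW le_nm] := leqP m n.
  by rewrite -(subnK le_mn) iterD fconnect_iter.
by rewrite -(subnK le_nm) iterD fconnect_iter orbT.
Qed.

Lemma branch_head_ancestor x t :
  is_branch par (x :: t) -> {in x :: t, forall v, fconnect (step par) v x}.
Proof.
move=> br v; rewrite inE => /predU1P [-> | vt]; first exact: connect0.
have tr : transitive (fun a b => fconnect (step par) b a).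
  by move=> b a d ba db; apply: connect_trans db ba.
have up : subrel (fun a b => is_child par b a) (fun a b => fconnect (step par) b a).
  by move=> a b /eqP/fconnect_parent.
by have /allP := order_path_min tr (sub_path up br); apply.
Qed.

(* With the last-born lb w drawn as the rightmost child of w, left_of u v
   says that u and v split at w, with v below lb w and u below another child. *)
Definition left_of (u v : V) : bool :=
  [exists w, exists a, [&& is_child par a w, is_child par (lb w) w, a != lb w,
                            fconnect (step par) u a & fconnect (step par) v (lb w)]].

Lemma left_of_trans : transitive left_of.
Proof.
move=> v u z /existsP [w /existsP [a /and5P [pa plb a_ne ua vlb]]].
move=> /existsP [w' /existsP [a' /and5P [pa' plb' a'_ne va' zlb']]].
have a'_ne_lb : a' != lb w.
  apply: contra a'_ne => /eqP a'E; move: pa' plb.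
  by rewrite a'E => /eqP pw' /eqP; rewrite pw' => -[->].
apply/existsP; have /orP [lb_a' | a'_lb] := ancestors_total vlb va'.
- have w_a' : fconnect (step par) w a'.
    by apply: proper_ancestor_parent lb_a' _ (eqP plb); rewrite eq_sym.
  exists w'; apply/existsP; exists a'; rewrite pa' plb' a'_ne zlb' andbT.
  exact: connect_trans ua (connect_trans (fconnect_parent (eqP pa)) w_a').
- have w'_lb : fconnect (step par) w' (lb w).
    exact: proper_ancestor_parent a'_lb a'_ne_lb (eqP pa').
  exists w; apply/existsP; exists a; rewrite pa plb a_ne ua.
  exact: connect_trans zlb' (connect_trans (fconnect_parent (eqP plb')) w'_lb).
Qed.

End ParentMap.

Section RootedTree.
Variables (V : finType) (r : V) (par : V -> option V).
Hypothesis tree : is_rooted_tree r par.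

Lemma fconnect_from_root v : fconnect (step par) r v -> v = r.
Proof.
have [r_root _] := tree.
by move/iter_findex <-; elim: findex => //= n ->; rewrite /step r_root.
Qed.

Lemma fconnect_step_root v : fconnect (step par) (step par v) v -> v = r.
Proof.
have [_ [_ to_root]] := tree.
rewrite (fconnect_f (step par)) => orbit_cycle; apply: fconnect_from_root.
have [n <-] := to_root v.
by rewrite (fconnect_cycle orbit_cycle) ?in_orbit // -fconnect_orbit fconnect_iter.
Qed.

Lemma parent_not_descendant v w : par v = Some w -> ~~ fconnect (step par) w v.
Proof.
move=> pv; apply/negP; rewrite -(step_parent pv) => /fconnect_step_root vr.
by have [r_root _] := tree; rewrite vr r_root in pv.
Qed.

Lemma siblings_ancestors_eq v a b w :
  par a = Some w -> par b = Some w ->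
  fconnect (step par) v a -> fconnect (step par) v b -> a = b.
Proof.
wlog ab : a b / fconnect (step par) a b.
  move=> gen pa pb va vb; have /orP [ab | ba] := ancestors_total va vb.
    exact: gen.
  by symmetry; apply: gen.
move=> pa pb _ _; apply/eqP/negPn/negP => a_ne_b.
have := proper_ancestor_parent ab a_ne_b pa.
by rewrite (negPf (parent_not_descendant pb)).
Qed.

Lemma left_of_irr (lb : V -> V) : irreflexive (left_of par lb).
Proof.
move=> u; apply/negbTE/existsP => -[w /existsP [a]].
move=> /and5P [/eqP pa /eqP plb a_ne ua ulb].
by rewrite (siblings_ancestors_eq pa plb ua ulb) eqxx in a_ne.
Qed.

End RootedTree.

Lemma derived_arc_left_of (V : finType) (r : V) (par : V -> option V)
    (lb : V -> V) (c : V -> {set V}) u v :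
  is_burling_tree r par lb c -> fully_derived_arc c u v -> left_of par lb u v.
Proof.
move=> [[_ [non_root_par _]] [lb_child [c_nil c_branch]]].
rewrite /fully_derived_arc => uv.
have u_ne_r : u != r by apply: contraTneq uv => ->; rewrite c_nil ?inE //; left.
have not_lb : ~ is_last_born par lb u.
  by move=> ulb; rewrite c_nil ?inE in uv; last by right.
have [w pu] : exists w, par u = Some w.
  by case: (par u) (non_root_par u u_ne_r) => [w|] //; exists w.
have [[|x t] [br hd cE]] := c_branch u w pu not_lb; first by rewrite cE inE in uv.
rewrite cE inE {}hd in uv br.
apply/existsP; exists w; apply/existsP; exists u; apply/and5P; split.
- by rewrite /is_child pu.
- by apply/lb_child/forallP => /(_ u); rewrite /is_child pu eqxx.
- by apply/eqP => uE; apply: not_lb; exists w; split=> //; rewrite -uE.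
- exact: connect0.
- exact: branch_head_ancestor br v uv.
Qed.

Theorem lemma3p2 (W : finType) (arc : rel W) :
  is_oriented_burling_graph arc -> ~ has_directed_cycle arc.
Proof.
move=> [_ [V [r [par [lb [c [burling [f [_ arcE]]]]]]]]] [s [s_nonnil _ cyc]].
have tree : is_rooted_tree r par by case: burling.
have arc_left_of : subrel arc (relpre f (left_of par lb)).
  by move=> x y; rewrite arcE => /(derived_arc_left_of burling).
have := sub_cycle arc_left_of cyc; rewrite -cycle_map.
have left_of_tr := @left_of_trans V par lb.
move/(irreflexive_transitive_cycle_nil (left_of_irr tree lb) left_of_tr).
by case: s s_nonnil cyc.
Qed.
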